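(* Let $\mathfrak K=(K,\bigsqcup,\odot,{}^*,{\sim},e)$ be a semi-Foulis dynamic algebra and $u\in\widetilde K$. Then the map $u\bullet(-)\colon\widetilde K\to\widetilde K$ equals the Sasaki projection $\pi_u$ of the orthomodular lattice $(\widetilde K,\preceq,{}^\perp)$, i.e. $u\bullet v=u\wedge(u^\perp\vee v)$ for all $v\in\widetilde K$.
   Context: An involutive unital quantale is $(Q,\bigsqcup,\odot,{}^*,e)$: $Q$ a complete join-semilattice, $\odot$ associative and distributing over arbitrary joins in each argument, $e$ a unit, ${}^*$ with $x^{**}=x$, $(x\odot y)^*=y^*\odot x^*$, $(\bigsqcup_i x_i)^*=\bigsqcup_i x_i^*$. An involutive generalized dynamic algebra is $\mathfrak K=(K,\bigsqcup,\odot,{}^*,{\sim},e)$ with $(K,\bigsqcup,\odot,{}^*,e)$ an involutive unital quantale and ${\sim}\colon K\to K$ such that for all $x,y\in K$ and families $(x_i)$: ${\sim}(x\odot{\sim}{\sim}y)={\sim}(x\odot y)$; ${\sim}(\bigsqcup_i{\sim}{\sim}x_i)={\sim}(\bigsqcup_i x_i)$; $({\sim}x)^*={\sim}x$; ${\sim}{\sim}({\sim}{\sim}x\odot y)={\sim}({\sim}x\sqcup{\sim}({\sim}x\sqcup y))$. Test set $\widetilde K=\{{\sim}k\mid k\in K\}$; for $W\subseteq\widetilde K$, $\bigvee W={\sim}{\sim}(\bigsqcup W)$; $w^\perp={\sim}w$; $k\preceq l$ iff $\bigvee\{k,l\}=l$; action $k\bullet v={\sim}{\sim}(k\odot v)$.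 It is a semi-Foulis dynamic algebra if $(\widetilde K,\preceq,{}^\perp)$ is a complete orthomodular lattice. In an orthomodular lattice the Sasaki projection onto $u$ is $\pi_u(x)=u\wedge(u^\perp\vee x)$. *)

Section Defs.
Context {K : Type}.

Definition pair_set (x y : K) : K -> Prop := fun z => z = x \/ z = y.
Definition image_set (f : K -> K) (S : K -> Prop) : K -> Prop :=
  fun z => exists s, S s /\ z = f s.

Definition sup_le (sup : (K -> Prop) -> K) (x y : K) : Prop := sup (pair_set x y) = y.

Definition is_lub_in (C : K -> Prop) (le : K -> K -> Prop) (S : K -> Prop) (m : K) : Prop :=
  C m /\ (forall s, S s -> le s m) /\ (forall b, C b -> (forall s, S s -> le s b) -> le m b).
Definition is_glb_in (C : K -> Prop) (le : K -> K -> Prop) (S : K -> Prop) (m : K) : Prop :=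
  C m /\ (forall s, S s -> le m s) /\ (forall b, C b -> (forall s, S s -> le b s) -> le b m).

Definition all_K : K -> Prop := fun _ => True.

Definition complete_join_semilattice (sup : (K -> Prop) -> K) : Prop :=
  (forall x, sup_le sup x x) /\
  (forall x y, sup_le sup x y -> sup_le sup y x -> x = y) /\
  (forall x y z, sup_le sup x y -> sup_le sup y z -> sup_le sup x z) /\
  (forall S, is_lub_in all_K (sup_le sup) S (sup S)).

Definition involutive_unital_quantale (sup : (K -> Prop) -> K) (mul : K -> K -> K)
  (inv : K -> K) (e : K) : Prop :=
  complete_join_semilattice sup /\
  (forall x y z, mul x (mul y z) = mul (mul x y) z) /\
  (forall x S, mul x (sup S) = sup (image_set (fun s => mul x s) S)) /\
  (forall x S, mul (sup S) x = sup (image_set (fun s => mul s x) S)) /\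
  (forall x, mul e x = x) /\ (forall x, mul x e = x) /\
  (forall x, inv (inv x) = x) /\
  (forall x y, inv (mul x y) = mul (inv y) (inv x)) /\
  (forall S, inv (sup S) = sup (image_set inv S)).

Definition IGDA (sup : (K -> Prop) -> K) (mul : K -> K -> K) (inv : K -> K)
  (neg : K -> K) (e : K) : Prop :=
  involutive_unital_quantale sup mul inv e /\
  (forall x y, neg (mul x (neg (neg y))) = neg (mul x y)) /\
  (forall S, neg (sup (image_set (fun x => neg (neg x)) S)) = neg (sup S)) /\
  (forall x, inv (neg x) = neg x) /\
  (forall x y, neg (neg (mul (neg (neg x)) y))
               = neg (sup (pair_set (neg x) (neg (sup (pair_set (neg x) y)))))).

Definition tests (neg : K -> K) : K -> Prop := fun t => exists k, t = neg k.

Definition tjoin (sup : (K -> Prop) -> K) (neg : K -> K) (W : K -> Prop) : K :=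
  neg (neg (sup W)).

Definition tle (sup : (K -> Prop) -> K) (neg : K -> K) (k l : K) : Prop :=
  tjoin sup neg (pair_set k l) = l.

Definition act (mul : K -> K -> K) (neg : K -> K) (k v : K) : K := neg (neg (mul k v)).

Definition complete_OML (C : K -> Prop) (le : K -> K -> Prop) (perp : K -> K) : Prop :=
  (forall x, C x -> le x x) /\
  (forall x y, C x -> C y -> le x y -> le y x -> x = y) /\
  (forall x y z, C x -> C y -> C z -> le x y -> le y z -> le x z) /\
  (forall S, (forall s, S s -> C s) -> exists m, is_lub_in C le S m) /\
  (forall S, (forall s, S s -> C s) -> exists m, is_glb_in C le S m) /\
  (forall x, C x -> C (perp x)) /\
  (forall x, C x -> perp (perp x) = x) /\
  (forall x y, C x -> C y -> le x y -> le (perp y) (perp x)) /\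
  (forall x b, C x -> is_glb_in C le (pair_set x (perp x)) b ->
               forall y, C y -> le b y) /\
  (forall x t, C x -> is_lub_in C le (pair_set x (perp x)) t ->
               forall y, C y -> le y t) /\
  (forall x y m, C x -> C y -> le x y ->
     is_glb_in C le (pair_set (perp x) y) m ->
     is_lub_in C le (pair_set x m) y).

Definition semi_Foulis (sup : (K -> Prop) -> K) (mul : K -> K -> K) (inv : K -> K)
  (neg : K -> K) (e : K) : Prop :=
  IGDA sup mul inv neg e /\ complete_OML (tests neg) (tle sup neg) neg.

End Defs.


(* On tests [~~] is the identity, and the second IGDA axiom lets [~~] be dropped
   under [~(_ ⊔ _)]; hence the join of two tests in the test lattice is
   [~~(a ⊔ b)], and by De Morgan for the orthocomplement the meet of [u] and [j]
   is [~(~u ⊔ ~j)].  The fourth axiom rewrites [u • v = ~~(~~u ⊙ v)] as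
   [~(~u ⊔ ~(~u ⊔ v))], which is that meet for [j = ~~(~u ⊔ v) = u^⊥ ∨ v]. *)

Section OrderBounds.
Context {K : Type} (C : K -> Prop) (le : K -> K -> Prop).

Lemma lub_unique S m m' :
  (forall x y, C x -> C y -> le x y -> le y x -> x = y) ->
  is_lub_in C le S m -> is_lub_in C le S m' -> m = m'.
Proof.
  intros Hanti [Cm [Um Lm]] [Cm' [Um' Lm']].
  apply Hanti; auto.
Qed.

Lemma perp_lub_glb (perp : K -> K) a b m :
  (forall x, C x -> perp (perp x) = x) ->
  (forall x y, C x -> C y -> le x y -> le (perp y) (perp x)) ->
  C a -> C b -> (forall x, C x -> C (perp x)) ->
  is_lub_in C le (pair_set a b) m ->
  is_glb_in C le (pair_set (perp a) (perp b)) (perp m).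
Proof.
  intros HperpK Hanti Ca Cb Cperp [Cm [Um Lm]].
  split; [auto|split].
  - intros s [-> | ->]; apply Hanti; auto; apply Um; [left | right]; reflexivity.
  - intros c Cc Lc. rewrite <- (HperpK c Cc). apply Hanti; auto.
    apply Lm; [auto|]. intros s [-> | ->].
    + rewrite <- (HperpK a Ca). apply Hanti; auto. apply Lc. left; reflexivity.
    + rewrite <- (HperpK b Cb). apply Hanti; auto. apply Lc. right; reflexivity.
Qed.

End OrderBounds.

Section CompleteJoinSemilattice.
Context {K : Type} (sup : (K -> Prop) -> K).
Hypothesis Hsup : complete_join_semilattice sup.

Local Notation "x <= y" := (sup_le sup x y).
Local Notation join a b := (sup (pair_set a b)).

Lemma sup_le_anti x y : x <= y -> y <= x -> x = y.
Proof. apply Hsup. Qed.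

Lemma sup_le_trans x y z : x <= y -> y <= z -> x <= z.
Proof. apply Hsup. Qed.

Lemma sup_ext S S' : (forall x, S x <-> S' x) -> sup S = sup S'.
Proof.
  intro HS. destruct Hsup as (_ & _ & _ & Hlub).
  destruct (Hlub S) as [_ [U L]], (Hlub S') as [_ [U' L']].
  apply sup_le_anti.
  - apply L; [exact I|]. intros s Hs. apply U', HS, Hs.
  - apply L'; [exact I|]. intros s Hs. apply U, HS, Hs.
Qed.

Lemma sup_image_pair f x y : sup (image_set f (pair_set x y)) = join (f x) (f y).
Proof.
  apply sup_ext. intro z. split.
  - intros [s [[-> | ->] ->]]; [left | right]; reflexivity.
  - intros [-> | ->]; [exists x | exists y]; split; auto; [left | right]; reflexivity.
Qed.

Lemma join_ub_l a b : a <= join a b.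
Proof. destruct Hsup as (_ & _ & _ & Hlub). apply (Hlub (pair_set a b)). left; reflexivity. Qed.

Lemma join_ub_r a b : b <= join a b.
Proof. destruct Hsup as (_ & _ & _ & Hlub). apply (Hlub (pair_set a b)). right; reflexivity. Qed.

Lemma join_lub a b c : a <= c -> b <= c -> join a b <= c.
Proof.
  intros Ha Hb. destruct Hsup as (_ & _ & _ & Hlub).
  apply (Hlub (pair_set a b)); [exact I|]. intros s [-> | ->]; assumption.
Qed.

Lemma join_assoc a b c : join (join a b) c = join a (join b c).
Proof.
  apply sup_le_anti; repeat apply join_lub.
  - apply join_ub_l.
  - apply (sup_le_trans _ (join b c)); [apply join_ub_l | apply join_ub_r].
  - apply (sup_le_trans _ (join b c)); apply join_ub_r.
  - apply (sup_le_trans _ (join a b)); apply join_ub_l.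
  - apply (sup_le_trans _ (join a b)); [apply join_ub_r | apply join_ub_l].
  - apply join_ub_r.
Qed.

End CompleteJoinSemilattice.

Section TestJoin.
Context {K : Type} (sup : (K -> Prop) -> K) (neg : K -> K).
Hypothesis Hsup : complete_join_semilattice sup.
Hypothesis neg_sup_negneg :
  forall S, neg (sup (image_set (fun x => neg (neg x)) S)) = neg (sup S).
Hypothesis negK : forall t, tests neg t -> neg (neg t) = t.

Local Notation join a b := (sup (pair_set a b)).

Lemma tests_neg x : tests neg (neg x).
Proof. exists x; reflexivity. Qed.

Lemma neg3 x : neg (neg (neg x)) = neg x.
Proof. apply negK, tests_neg. Qed.

Lemma neg_join_negneg_r a x :
  tests neg a -> neg (join a (neg (neg x))) = neg (join a x).
Proof.
  intro Ha. pose proof (neg_sup_negneg (pair_set a x)) as H.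
  rewrite (sup_image_pair sup Hsup), (negK a Ha) in H. exact H.
Qed.

Lemma neg_join_negneg_l x c :
  tests neg c -> neg (join (neg (neg x)) c) = neg (join x c).
Proof.
  intro Hc. pose proof (neg_sup_negneg (pair_set x c)) as H.
  rewrite (sup_image_pair sup Hsup), (negK c Hc) in H. exact H.
Qed.

Lemma tests_join_lub a b : tests neg a -> tests neg b ->
  is_lub_in (tests neg) (tle sup neg) (pair_set a b) (neg (neg (join a b))).
Proof.
  intros Ha Hb. split; [apply tests_neg | split].
  - intros s [-> | ->]; unfold tle, tjoin; rewrite neg_join_negneg_r by assumption;
      [rewrite (join_ub_l sup Hsup) | rewrite (join_ub_r sup Hsup)]; reflexivity.
  - intros c Hc Ub. unfold tle, tjoin in *.
    specialize (Ub a (or_introl eq_refl)) as Hac.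
    specialize (Ub b (or_intror eq_refl)) as Hbc.
    rewrite neg_join_negneg_l, (join_assoc sup Hsup), <- neg_join_negneg_r, Hbc
      by assumption.
    exact Hac.
Qed.

End TestJoin.

Theorem lemma3p6 (K : Type) (sup : (K -> Prop) -> K) (mul : K -> K -> K)
  (inv : K -> K) (neg : K -> K) (e : K)
  (HK : semi_Foulis sup mul inv neg e)
  (u : K) (Hu : tests neg u) :
  forall v, tests neg v ->
  forall j, is_lub_in (tests neg) (tle sup neg) (pair_set (neg u) v) j ->
  is_glb_in (tests neg) (tle sup neg) (pair_set u j) (act mul neg u v).
Proof.
  intros v Hv j Hj.
  destruct HK as [[[Hsup _] (_ & A2 & _ & A4)] Homl].
  destruct Homl as (_ & Hanti & _ & _ & _ & Hperp & HperpK & Hperp_anti & _).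
  assert (Ej : j = neg (neg (sup (pair_set (neg u) v)))).
  { apply (lub_unique _ _ _ _ _ Hanti Hj).
    apply tests_join_lub; auto using tests_neg. }
  assert (Hj_test : tests neg j) by (rewrite Ej; apply tests_neg).
  assert (Hact : act mul neg u v = neg (sup (pair_set (neg u) (neg j)))).
  { pose proof (A4 u v) as H. rewrite (HperpK u Hu) in H.
    unfold act. rewrite H, Ej, (neg3 neg HperpK). reflexivity. }
  pose proof (perp_lub_glb _ _ neg (neg u) (neg j) _ HperpK Hperp_anti
                (tests_neg neg u) (tests_neg neg j) Hperp
                (tests_join_lub sup neg Hsup A2 HperpK _ _
                   (tests_neg neg u) (tests_neg neg j))) as Hglb.
  rewrite (HperpK u Hu), (HperpK j Hj_test), (neg3 neg HperpK) in Hglb.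
  rewrite Hact. exact Hglb.
Qed.
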